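(* Let $N \ge M \ge 1$ be integers, let $\mathcal{U}_r=\{r_1,\dots,r_N\}$ (robots) and $\mathcal{U}_g=\{g_1,\dots,g_M\}$ (goals), and let $\mathcal{F}=\{(i,j): i\in\{1,\dots,N\},\ j\in\{1,\dots,M\}\}$ be the edge set of the complete bipartite graph between them. For each edge $(i,j)\in\mathcal{F}$ let $C_{ij}$ be a real-valued integrable random variable (all defined on a common probability space, with arbitrary joint distribution). Let $\mathcal{O}\subset\mathcal{F}$ be an initial assignment such that every goal $j$ has exactly one $i$ with $(i,j)\in\mathcal{O}$, and every robot $i$ has at most one $j$ with $(i,j)\in\mathcal{O}$. Put $\mathcal{F}_{\mathcal{O}}=\mathcal{F}\setminus\mathcal{O}$ and define, for $\mathcal{A}\subseteq\mathcal{F}_{\mathcal{O}}$, $$J_{\mathcal{O}}(\mathcal{A})=\frac{1}{M}\sum_{j=1}^{M}\mathbb{E}\Big[\min\{C_{kj} : (k,j)\in\mathcal{A}\cup\mathcal{O}\}\Big].$$ Then $J_{\mathcal{O}}:2^{\mathcal{F}_{\mathcal{O}}}\to\mathbb{R}$ is monotone non-increasing and supermodular.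
   Context: A set function $J:2^{\mathcal{F}_{\mathcal{O}}}\to\mathbb{R}$ is monotone non-increasing if $J(\mathcal{A})\ge J(\mathcal{B})$ whenever $\mathcal{A}\subseteq\mathcal{B}\subseteq\mathcal{F}_{\mathcal{O}}$. The marginal decrease of $J$ at $\mathcal{A}$ with respect to $x\notin\mathcal{A}$ is $\Delta_J(x\mid\mathcal{A})=J(\mathcal{A})-J(\mathcal{A}\cup\{x\})$. $J$ is supermodular if for all $\mathcal{A}\subseteq\mathcal{B}\subseteq\mathcal{F}_{\mathcal{O}}$ and all $x\in\mathcal{F}_{\mathcal{O}}\setminus\mathcal{B}$ one has $\Delta_J(x\mid\mathcal{A})\ge\Delta_J(x\mid\mathcal{B})$. The quantity $\min\{C_{kj}:(k,j)\in\mathcal{A}\cup\mathcal{O}\}$ is the effective waiting time at goal $j$ (only the first-arriving robot serves the goal). *)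

From HB Require Import structures.
From mathcomp Require Import all_boot all_order all_algebra.
From mathcomp Require Import all_classical all_reals all_analysis.
Set Implicit Arguments. Unset Strict Implicit. Unset Printing Implicit Defensive.
Import Order.TTheory GRing.Theory Num.Theory.
Local Open Scope ring_scope.

(* The effective waiting time at goal j under edge set S:
   min { C k j : (k,j) \in S }, computed in the extended reals
   (+oo for an empty set, never the case here since O covers every goal). *)
Definition eff_wait {d} {T : measurableType d} {R : realType}
  {P : probability T R} {N M : nat}
  (C : 'I_N -> 'I_M -> {RV P >-> R}) (S : {set 'I_N * 'I_M}) (j : 'I_M)
  : T -> R :=
  fun x => fine (\big[Order.min/+oo%E]_(k | (k, j) \in S) ((C k j x)%:E : \bar R)).

Definition J_O {d} {T : measurableType d} {R : realType}
  {P : probability T R} {N M : nat}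
  (C : 'I_N -> 'I_M -> {RV P >-> R}) (O A : {set 'I_N * 'I_M}) : R :=
  (M%:R)^-1 * \sum_(j < M) fine ('E_P[eff_wait C (A :|: O) j]).

From HB Require Import structures.
From mathcomp Require Import all_boot all_order all_algebra.
From mathcomp Require Import all_classical all_reals all_analysis.
From mathcomp Require Import lra.
Set Implicit Arguments. Unset Strict Implicit. Unset Printing Implicit Defensive.
Import Order.TTheory GRing.Theory Num.Theory.
Local Open Scope ring_scope.

(* For a fixed goal j and a fixed outcome, S |-> min {C_kj : (k,j) in S u O}
   turns unions of edge sets into minima.  Every set function F with
   F (A u B) = min (F A) (F B) is antitone, and it is supermodular because
   F B - F (x |: B) = F B - min (F [x]) (F B) is nondecreasing in F B.
   Both properties survive expectation, finite sums and nonnegative scaling,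
   which is how J_O is built; since O covers every goal, each minimum ranges
   over a nonempty family of integrable variables and so is integrable. *)

Section set_function_properties.
Variables (R : realType) (X : finType).
Implicit Types (F : {set X} -> R) (A B : {set X}).

Definition set_antitone F := forall A B, A \subset B -> F B <= F A.

Definition supermodular F :=
  forall A B x, A \subset B -> F B - F (x |: B) <= F A - F (x |: A).

Lemma subr_min_nondecreasing (c : R) :
  {homo (fun t => t - Num.min c t) : s t / s <= t}.
Proof. by move=> s t st; case: (leP c s); case: (leP c t) => ? ?; lra. Qed.

Lemma min_morph_antitone F :
  {morph F : A B / A :|: B >-> Num.min A B} -> set_antitone F.
Proof. by move=> FU A B /finset.setUidPr <-; rewrite FU ge_min lexx. Qed.

Lemma min_morph_supermodular F :
  {morph F : A B / A :|: B >-> Num.min A B} -> supermodular F.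
Proof.
move=> FU A B x AB; rewrite !FU.
exact/subr_min_nondecreasing/(min_morph_antitone FU).
Qed.

Lemma set_antitone_scale c F : 0 <= c -> set_antitone F ->
  set_antitone (fun A => c * F A).
Proof. by move=> c0 FA A B AB; rewrite ler_wpM2l // FA. Qed.

Lemma supermodular_scale c F : 0 <= c -> supermodular F ->
  supermodular (fun A => c * F A).
Proof. by move=> c0 FS A B x AB; rewrite -!mulrBr ler_wpM2l // FS. Qed.

Lemma set_antitone_sum (I : Type) (r : seq I) (F : I -> {set X} -> R) :
  (forall i, set_antitone (F i)) -> set_antitone (fun A => \sum_(i <- r) F i A).
Proof. by move=> FA A B AB; apply: ler_sum => i _; apply: FA. Qed.

Lemma supermodular_sum (I : Type) (r : seq I) (F : I -> {set X} -> R) :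
  (forall i, supermodular (F i)) -> supermodular (fun A => \sum_(i <- r) F i A).
Proof.
by move=> FS A B x AB; rewrite -!sumrB; apply: ler_sum => i _; apply: FS.
Qed.

End set_function_properties.

Section integrability_and_expectation.
Context d (T : measurableType d) (R : realType) (P : probability T R).
Implicit Types f g : T -> R.

Lemma fine_expectation_le f g :
  P.-integrable setT (EFin \o f) -> P.-integrable setT (EFin \o g) ->
  (forall t, f t <= g t) -> fine 'E_P[f] <= fine 'E_P[g].
Proof.
move=> fi gi fg; rewrite unlock; apply: fine_le; rewrite ?integrable_fin_num //.
by apply: le_integral => // t _; rewrite lee_fin.
Qed.

Lemma fine_expectationB f g :
  P.-integrable setT (EFin \o f) -> P.-integrable setT (EFin \o g) ->
  fine 'E_P[f \- g] = fine 'E_P[f] - fine 'E_P[g].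
Proof.
by move=> /Lfun1_integrable fi /Lfun1_integrable gi;
  rewrite expectationB // fineB // expectation_fin_num.
Qed.

Lemma integrable_min f g :
  P.-integrable setT (EFin \o f) -> P.-integrable setT (EFin \o g) ->
  P.-integrable setT (EFin \o (fun t => Num.min (f t) (g t))).
Proof.
move=> fi gi; apply: (le_integrable measurableT _ _
  (integrableD measurableT (integrable_abse fi) (integrable_abse gi))).
- apply/measurable_realfun.measurable_EFinP.
  apply: measurable_realfun.measurable_minr;
    apply/measurable_realfun.measurable_EFinP.
  + exact: measurable_int fi.
  + exact: measurable_int gi.
- move=> t _ /=; rewrite lee_fin [leRHS]ger0_norm ?addr_ge0 //.
  by case: (leP (f t) (g t)) => _; rewrite ?lerDl ?lerDr.
Qed.

Lemma integrable_bigmin (I : Type) (r : seq I) (Q : pred I) (f : I -> T -> R) a :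
  P.-integrable setT (EFin \o a) ->
  (forall i, P.-integrable setT (EFin \o f i)) ->
  P.-integrable setT
    (EFin \o (fun t => \big[Order.min/a t]_(i <- r | Q i) f i t)).
Proof.
move=> ai fi; elim: r => [|i r IH]; first by under eq_fun do rewrite big_nil.
under eq_fun do rewrite big_cons.
by case: (Q i) => //; apply: integrable_min.
Qed.

Variables (X : finType) (F : {set X} -> T -> R).
Hypothesis F_int : forall A, P.-integrable setT (EFin \o F A).

Lemma set_antitone_expectation :
  (forall t, set_antitone (F^~ t)) -> set_antitone (fun A => fine 'E_P[F A]).
Proof. by move=> FA A B AB; apply: fine_expectation_le => // t; apply: FA. Qed.

Lemma supermodular_expectation :
  (forall t, supermodular (F^~ t)) -> supermodular (fun A => fine 'E_P[F A]).
Proof.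
move=> FS A B x AB; rewrite -!fine_expectationB //.
apply: fine_expectation_le => [||t]; last exact: FS.
  all: exact: (integrableB measurableT (F_int _) (F_int _)).
Qed.

End integrability_and_expectation.

Lemma bigmin_seed_eq d (T : orderType d) (I : finType) (x y : T) (Q : pred I)
    (F : I -> T) i0 :
  Q i0 -> (F i0 <= x)%O -> (F i0 <= y)%O ->
  \big[Order.min/x]_(i | Q i) F i = \big[Order.min/y]_(i | Q i) F i.
Proof.
move=> Qi0 Fx Fy; apply/le_anti/andP; split; apply: le_bigmin => [|i Qi].
- exact: bigmin_inf Qi0 Fy.
- exact: bigmin_le_cond.
- exact: bigmin_inf Qi0 Fx.
- exact: bigmin_le_cond.
Qed.

Lemma fine_bigmin_EFin (R : realType) (I : finType) (Q : pred I) (f : I -> R) i0 :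
  Q i0 -> fine (\big[Order.min/+oo%E]_(i | Q i) (f i)%:E) =
          \big[Order.min/f i0]_(i | Q i) f i.
Proof.
move=> Qi0; rewrite (bigmin_seed_eq (y := (f i0)%:E) Qi0) ?leey //.
by rewrite -(big_morph _ EFin_min erefl).
Qed.

Lemma bigmin_predU (R : realType) (I : finType) (x : R) (Q Q' : pred I)
    (f : I -> R) :
  \big[Order.min/x]_(i | Q i || Q' i) f i =
  Num.min (\big[Order.min/x]_(i | Q i) f i) (\big[Order.min/x]_(i | Q' i) f i).
Proof.
have := bigminU x [set i | Q i] [set i | Q' i] f.
rewrite (eq_bigl (fun i => Q i || Q' i)) => [->|i]; last by rewrite !inE.
by congr Num.min; apply: eq_bigl => i; rewrite inE.
Qed.

Section assignment.
Context d (T : measurableType d) (R : realType) (P : probability T R) (N M : nat).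
Variables (C : 'I_N -> 'I_M -> {RV P >-> R}) (O : {set 'I_N * 'I_M}).
Hypothesis C_int : forall i j, P.-integrable setT (EFin \o C i j).
Hypothesis O_cover : forall j, exists i, (i, j) \in O.
Implicit Types (S : {set 'I_N * 'I_M}) (i k : 'I_N) (j : 'I_M) (t : T).

Lemma eff_wait_bigmin S j k t : (k, j) \in S ->
  eff_wait C S j t = \big[Order.min/C k j t]_(i | (i, j) \in S) C i j t.
Proof.
exact: (@fine_bigmin_EFin _ _ (fun i => (i, j) \in S) (fun i => C i j t)).
Qed.

Lemma eff_wait_integrable S j k : (k, j) \in S ->
  P.-integrable setT (EFin \o eff_wait C S j).
Proof.
move=> kjS.
have -> : eff_wait C S j =
          fun t => \big[Order.min/C k j t]_(i | (i, j) \in S) C i j t.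
  by apply/funext => t; exact: eff_wait_bigmin.
exact: integrable_bigmin.
Qed.

Lemma eff_wait_setUO_min_morph j t :
  {morph (fun S => eff_wait C (S :|: O) j t) : A B / A :|: B >-> Num.min A B}.
Proof.
have [k kjO] := O_cover j.
have kjSO S : (k, j) \in S :|: O by rewrite inE kjO orbT.
move=> A B /=; rewrite !(eff_wait_bigmin _ (kjSO _)) -bigmin_predU.
by apply: eq_bigl => i; rewrite finset.setUUl finset.in_setU.
Qed.

Lemma eff_wait_setUO_integrable j S :
  P.-integrable setT (EFin \o eff_wait C (S :|: O) j).
Proof.
have [k kjO] := O_cover j.
by apply: (eff_wait_integrable (k := k)); rewrite inE kjO orbT.
Qed.

Lemma J_O_antitone : set_antitone (J_O C O).
Proof.
apply: set_antitone_scale; first by rewrite invr_ge0 ler0n.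
apply: set_antitone_sum => j; apply: set_antitone_expectation.
  exact: eff_wait_setUO_integrable.
by move=> t; apply/min_morph_antitone/eff_wait_setUO_min_morph.
Qed.

Lemma J_O_supermodular : supermodular (J_O C O).
Proof.
apply: supermodular_scale; first by rewrite invr_ge0 ler0n.
apply: supermodular_sum => j; apply: supermodular_expectation.
  exact: eff_wait_setUO_integrable.
by move=> t; apply/min_morph_supermodular/eff_wait_setUO_min_morph.
Qed.

End assignment.

Theorem theorem1 (d : measure_display) (T : measurableType d) (R : realType)
  (P : probability T R) (N M : nat) (HM : (1 <= M)%N) (HNM : (M <= N)%N)
  (C : 'I_N -> 'I_M -> {RV P >-> R})
  (Cint : forall i j, P.-integrable setT (EFin \o C i j))
  (O : {set 'I_N * 'I_M})
  (Ogoal : forall j : 'I_M, exists! i : 'I_N, (i, j) \in O)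
  (Orobot : forall (i : 'I_N) (j j' : 'I_M), (i, j) \in O -> (i, j') \in O -> j = j') :
  (forall A B : {set 'I_N * 'I_M},
     A \subset B -> B \subset ~: O -> J_O C O B <= J_O C O A) /\
  (forall (A B : {set 'I_N * 'I_M}) (x : 'I_N * 'I_M),
     A \subset B -> B \subset ~: O -> x \in ~: O -> x \notin B ->
     J_O C O B - J_O C O (x |: B) <= J_O C O A - J_O C O (x |: A)).
Proof.
have O_cover j : exists i, (i, j) \in O by have [i [iO _]] := Ogoal j; exists i.
split=> [A B AB _ | A B x AB _ _ _].
- exact: J_O_antitone Cint O_cover A B AB.
- exact: J_O_supermodular Cint O_cover A B x AB.
Qed.
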